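(* Let $X$ be a finitely primitive countable Markov shift over the alphabet $\mathbb N$, with associated integer $N\ge0$ and finite set $\Lambda$ of admissible strings of length $N$. Let $\phi\colon X\to\mathbb R$ be measurable and $\mu_\phi$ a Gibbs state for $\phi$. Then there exists $c>0$ such that for every $(a,b)\in\mathbb N^2$ and every integer $n>N$, $\mu_\phi([a]\cap\sigma^{-n}[b])\ge c\,\mu_\phi[a]\,\mu_\phi[b]$.
   Context: $\mathbb N=\{0,1,\dots\}$; $A$ is a 0-1 matrix indexed by $\mathbb N$ without zero rows or columns; $X=\{x\in\mathbb N^{\mathbb N}:A_{x_ix_{i+1}}=1\ \forall i\}$ with left shift $\sigma$. $E^n$: admissible strings of length $n$ (consecutive letters $a,b$ satisfy $A_{ab}=1$); $E^*=\bigcup_{n\ge1}E^n$; $[w]=\{x:x_i=w_i,\ i<|w|\}$. $X$ is finitely primitive if there is an integer $N\ge0$ and a finite set $\Lambda$ of admissible strings of common length $N$ (consisting of the empty string if $N=0$) such that for all $i,j\in E^*$ there is $\lambda\in\Lambda$ with $i\lambda j\in E^*$. $S_n\phi=\sum_{i<n}\phi\circ\sigma^i$. Gibbs state: there are $c_0\ge1$, $P\in\mathbb R$ with $c_0^{-1}\le\mu_\phi[x_0,\dots,x_{n-1}]/\exp(-Pn+S_n\phi(x))\le c_0$ for all $n\ge1$, $x\in X$. *)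

From HB Require Import structures.
From mathcomp Require Import all_boot all_order all_algebra.
From mathcomp Require Import all_classical all_reals all_analysis.
Set Implicit Arguments. Unset Strict Implicit. Unset Printing Implicit Defensive.
Import Order.TTheory GRing.Theory Num.Theory.
Local Open Scope classical_set_scope.
Local Open Scope ring_scope.

Definition seqN := nat -> nat.

(* A : 0-1 matrix indexed by N, given as a boolean relation. *)
Definition no_zero_rows_cols (A : nat -> nat -> bool) : Prop :=
  (forall a, exists b, A a b) /\ (forall b, exists a, A a b).

Definition adm (A : nat -> nat -> bool) (w : seq nat) : Prop :=
  forall i, (i.+1 < size w)%N -> A (nth 0%N w i) (nth 0%N w i.+1).

Definition Estar (A : nat -> nat -> bool) (w : seq nat) : Prop :=
  (0 < size w)%N /\ adm A w.

Definition SX (A : nat -> nat -> bool) : set seqN :=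
  [set x | forall i, A (x i) (x i.+1)].

Definition lshift_seq (x : seqN) : seqN := fun i => x i.+1.

Definition cyl (A : nat -> nat -> bool) (w : seq nat) : set seqN :=
  [set x | SX A x /\ forall i, (i < size w)%N -> x i = nth 0%N w i].

Definition finitely_primitive_with (A : nat -> nat -> bool) (N : nat)
  (Lambda : seq (seq nat)) : Prop :=
  (forall l, l \in Lambda -> size l = N /\ adm A l) /\
  (forall i j, Estar A i -> Estar A j ->
     exists2 l, l \in Lambda & Estar A (i ++ l ++ j)).

Definition full_cyls : set (set seqN) :=
  [set C | exists w : seq nat,
     C = [set x | forall i, (i < size w)%N -> x i = nth 0%N w i]].

(* N^N with the product (= cylinder = Borel) sigma-algebra *)
Definition Omega := g_sigma_algebraType full_cyls.

Definition birkhoff {R : realType} (phi : seqN -> R) (n : nat) (x : seqN) : R :=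
  \sum_(i < n) phi (iter i lshift_seq x).

Definition gibbs_state {R : realType} (A : nat -> nat -> bool)
  (phi : seqN -> R) (mu : set Omega -> \bar R) : Prop :=
  exists (c0 : R) (P : R), 1 <= c0 /\
    forall (n : nat) (x : seqN), (1 <= n)%N -> SX A x ->
      ((c0^-1 * expR (- P * n%:R + birkhoff phi n x))%:E <= mu (cyl A (mkseq x n)))%E
      /\ (mu (cyl A (mkseq x n)) <= (c0 * expR (- P * n%:R + birkhoff phi n x))%:E)%E.

From HB Require Import structures.
From mathcomp Require Import all_boot all_order all_algebra.
From mathcomp Require Import all_classical all_reals all_analysis.
From mathcomp Require Import ring.
Import Order.TTheory GRing.Theory Num.Theory.
Local Open Scope classical_set_scope.
Local Open Scope ring_scope.

(** For a cylinder [u] of length [p] and a connecting word [l] of [Lambda] such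
  that [u ++ l ++ [:: b]] is admissible, the Gibbs bounds and the cocycle
  identity [S_(p+N+1) = S_p + S_N \o sigma^p + S_1 \o sigma^(p+N)] give
  [mu [u l b] >= c0^-3 delta mu [u] mu [b]], where [delta > 0] bounds the Gibbs
  weights on the finitely many cylinders [[l]] from below (bounded distortion).
  This is the case of the gap [n = p + N]; larger gaps follow by splitting [[u]]
  into the disjoint cylinders [[u e]] and summing. *)

Definition full_cyl (w : seq nat) : set Omega :=
  [set x | forall i, (i < size w)%N -> x i = nth 0%N w i].

Lemma measurable_full_cyl w : measurable (full_cyl w).
Proof. by apply: sub_sigma_algebra; exists w. Qed.

Lemma measurable_bigcup_full_cyl (W : set (seq nat)) :
  measurable (\bigcup_(w in W) full_cyl w).
Proof.
rewrite bigcup_mkcond; apply: countable_bigcupT_measurable; first exact: countableP.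
by move=> w; case: ifP => _; [exact: measurable_full_cyl | exact: measurable0].
Qed.

Lemma mkseq_prefix {x : seqN} {w : seq nat} :
  (forall i, (i < size w)%N -> x i = nth 0%N w i) -> mkseq x (size w) = w.
Proof.
move=> xw; apply: (@eq_from_nth _ 0%N); rewrite size_mkseq // => i lt_i.
by rewrite nth_mkseq // xw.
Qed.

Lemma measurable_coord i e : measurable [set x : Omega | x i = e].
Proof.
have -> : [set x : Omega | x i = e] =
    \bigcup_(w in [set w | size w = i.+1 /\ nth 0%N w i = e]) full_cyl w.
  apply/seteqP; split => x /=.
    move=> xi; exists (mkseq x i.+1); first by split; [exact: size_mkseq | rewrite nth_mkseq].
    by move=> k; rewrite size_mkseq => lt_k; rewrite nth_mkseq.
  by move=> [w [sw <-] xw]; rewrite xw // sw.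
exact: measurable_bigcup_full_cyl.
Qed.

Lemma measurable_SX A : measurable (SX A : set Omega).
Proof.
have -> : (SX A : set Omega) = \bigcap_i \bigcup_(w in
    [set w | size w = i.+2 /\ A (nth 0%N w i) (nth 0%N w i.+1)]) full_cyl w.
  apply/seteqP; split => x /=.
    move=> xA i _; exists (mkseq x i.+2); first by split; [exact: size_mkseq | rewrite !nth_mkseq].
    by move=> k; rewrite size_mkseq => lt_k; rewrite nth_mkseq.
  by move=> xA i; have [w [sw Aw] xw] := xA i I; rewrite !xw ?sw.
by apply: bigcapT_measurable => i; exact: measurable_bigcup_full_cyl.
Qed.

Lemma measurable_cyl A w : measurable (cyl A w : set Omega).
Proof. exact: measurableI (measurable_SX A) (measurable_full_cyl w). Qed.

Lemma iter_lshift n (x : seqN) i : iter n lshift_seq x i = x (i + n)%N.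
Proof. by elim: n i => [|n IHn] i /=; rewrite ?addn0 // /lshift_seq IHn addnS. Qed.

Lemma SX_iter_lshift A n x : SX A x -> SX A (iter n lshift_seq x).
Proof. by move=> xA i; rewrite !iter_lshift. Qed.

Lemma cyl_cat {A u v x} :
  cyl A (u ++ v) x -> cyl A u x /\ cyl A v (iter (size u) lshift_seq x).
Proof.
move=> [xA xuv]; split; split=> [//|i lt_i].
- by rewrite xuv ?nth_cat ?lt_i // size_cat ltn_addr.
- exact: SX_iter_lshift.
rewrite iter_lshift xuv; last by rewrite size_cat addnC ltn_add2l.
by rewrite nth_cat ltnNge leq_addl /= addnK.
Qed.

Lemma cylI_preimage_iter_lshift A u n b :
  cyl A u `&` iter n lshift_seq @^-1` cyl A [:: b] = cyl A u `&` [set x | x n = b].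
Proof.
apply/seteqP; split => x /= [xu xb]; split => //.
  by case: xb => _ /(_ 0%N isT); rewrite iter_lshift.
split; first exact: SX_iter_lshift xu.1.
by case=> // _; rewrite iter_lshift.
Qed.

Lemma cyl_Estar {A u x} : (0 < size u)%N -> cyl A u x -> Estar A u.
Proof.
move=> u_gt0 [xA xu]; split=> // i lt_i.
by rewrite -xu ?(ltn_trans _ lt_i) // -xu.
Qed.

Fixpoint extend_word (s : nat -> nat) (w : seq nat) (i : nat) : nat :=
  if i is j.+1 then
    if (i < size w)%N then nth 0%N w i else s (extend_word s w j)
  else nth 0%N w 0.

Lemma Estar_cyl {A : nat -> nat -> bool} {w} :
  (forall a, exists b, A a b) -> Estar A w -> exists x, cyl A w x.
Proof.
move=> A_row [_ Aw]; pose s a := xchoose (A_row a).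
have As a : A a (s a) by exact: xchooseP.
have ext_w i : (i < size w)%N -> extend_word s w i = nth 0%N w i.
  by case: i => [|i] //= ->.
exists (extend_word s w); split => // i /=; case: ifP => lt_i; last exact: As.
by rewrite ext_w ?(ltn_trans _ lt_i) //; apply: Aw.
Qed.

Lemma cyl_bigcup_rcons A u : cyl A u = \bigcup_e cyl A (rcons u e).
Proof.
apply/seteqP; split => x /=.
  move=> [xA xu]; exists (x (size u)) => //; split => // i.
  rewrite size_rcons ltnS nth_rcons leq_eqVlt => /orP[/eqP ->|lt_i].
    by rewrite ltnn eqxx.
  by rewrite lt_i xu.
move=> [e _ [xA xue]]; split => // i lt_i.
by rewrite xue ?nth_rcons ?lt_i // size_rcons ltnS ltnW.
Qed.

Lemma trivIset_cylI_rcons A u (S : set seqN) :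
  trivIset setT (fun e => cyl A (rcons u e) `&` S).
Proof.
move=> e e' _ _ [x [[[_ xe] _] [[_ xe'] _]]].
move: (xe (size u)) (xe' (size u)); rewrite !size_rcons !nth_rcons ltnn eqxx ltnSn.
by move=> <- // <-.
Qed.

Section CylinderMeasure.
Variables (R : realType) (mu : {measure set Omega -> \bar R}).
Variable A : nat -> nat -> bool.

Lemma measure_cylI_rcons u (S : set Omega) : measurable S ->
  mu (cyl A u `&` S) = (\sum_(0 <= e <oo | e \in setT) mu (cyl A (rcons u e) `&` S))%E.
Proof.
move=> mS; rewrite [cyl A u]cyl_bigcup_rcons setI_bigcupl measure_bigcup //.
  by move=> e _; apply: measurableI mS; exact: measurable_cyl.
exact: trivIset_cylI_rcons.
Qed.

Lemma cylI_coord_lb_delay (c : R) b m : 0 <= c ->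
  (forall u, (0 < size u)%N ->
     (c%:E * mu (cyl A u) <= mu (cyl A u `&` [set x | x (size u + m)%N = b]))%E) ->
  forall d u, (0 < size u)%N ->
     (c%:E * mu (cyl A u) <= mu (cyl A u `&` [set x | x (size u + m + d)%N = b]))%E.
Proof.
move=> c_ge0 lb0; elim=> [|d IHd] u u_gt0; first by rewrite addn0; exact: lb0.
rewrite -{1}[cyl A u]setIT !measure_cylI_rcons //; last exact: measurable_coord.
rewrite -nneseriesZl; last by move=> *; exact: measure_ge0.
apply: lee_nneseries => [e _ _|e _]; first by rewrite mule_ge0 ?measure_ge0.
rewrite setIT; have := IHd (rcons u e); rewrite size_rcons -!addnA addSnnS -addnS.
by apply.
Qed.

End CylinderMeasure.

Lemma exists_pos_lb_seq (T : eqType) (R : realDomainType) (s : seq T)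
    (Q : T -> R -> Prop) :
  (forall t d d', Q t d -> d' <= d -> Q t d') ->
  (forall t, t \in s -> exists2 d, 0 < d & Q t d) ->
  exists2 d, 0 < d & forall t, t \in s -> Q t d.
Proof.
move=> Q_mono; elim: s => [|t s IHs] Qs; first by exists 1.
have [d1 d1_gt0 Qtd1] := Qs t (mem_head _ _).
have [d2 d2_gt0 Qsd2] : exists2 d, 0 < d & forall t, t \in s -> Q t d.
  by apply: IHs => t' t's; apply: Qs; rewrite in_cons t's orbT.
exists (Num.min d1 d2) => [|t']; first by rewrite lt_min d1_gt0 d2_gt0.
rewrite in_cons => /orP[/eqP -> | t's].
  by apply: Q_mono Qtd1 _; rewrite ge_min lexx.
by apply: Q_mono (Qsd2 _ t's) _; rewrite ge_min lexx orbT.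
Qed.

Lemma birkhoffD (R : realType) (phi : seqN -> R) p q x :
  birkhoff phi (p + q) x = birkhoff phi p x + birkhoff phi q (iter p lshift_seq x).
Proof.
rewrite /birkhoff big_split_ord /=; congr (_ + _).
by apply: eq_bigr => i _; rewrite -iterD addnC.
Qed.

Definition gibbs_weight {R : realType} (P : R) (phi : seqN -> R) n x :=
  expR (- P * n%:R + birkhoff phi n x).

Lemma gibbs_weightD (R : realType) (P : R) phi p q x :
  gibbs_weight P phi (p + q) x =
  gibbs_weight P phi p x * gibbs_weight P phi q (iter p lshift_seq x).
Proof.
by rewrite /gibbs_weight -expRD birkhoffD natrD mulrDr addrACA.
Qed.

Lemma gibbs_weight0 (R : realType) (P : R) phi x : gibbs_weight P phi 0 x = 1.
Proof. by rewrite /gibbs_weight /birkhoff big_ord0 mulr0 addr0 expR0. Qed.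

Lemma gibbs_weight_gt0 (R : realType) (P : R) phi n x : 0 < gibbs_weight P phi n x.
Proof. exact: expR_gt0. Qed.

Section GibbsState.
Context {R : realType} {A : nat -> nat -> bool} {phi : seqN -> R}.
Context {mu : {measure set Omega -> \bar R}} {c0 P : R}.
Hypothesis c0_ge1 : 1 <= c0.
Hypothesis gibbs : forall n x, (1 <= n)%N -> SX A x ->
  ((c0^-1 * expR (- P * n%:R + birkhoff phi n x))%:E <= mu (cyl A (mkseq x n)))%E
  /\ (mu (cyl A (mkseq x n)) <= (c0 * expR (- P * n%:R + birkhoff phi n x))%:E)%E.

Local Notation weight := (gibbs_weight P phi).

Let c0_gt0 : 0 < c0. Proof. exact: lt_le_trans c0_ge1. Qed.

Lemma gibbs_cyl_lb {w x} : (0 < size w)%N -> cyl A w x ->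
  ((c0^-1 * weight (size w) x)%:E <= mu (cyl A w))%E.
Proof. by move=> w_gt0 [xA xw]; rewrite -{2}(mkseq_prefix xw); case: (gibbs _ _ w_gt0 xA). Qed.

Lemma gibbs_cyl_ub {w x} : (0 < size w)%N -> cyl A w x ->
  (mu (cyl A w) <= (c0 * weight (size w) x)%:E)%E.
Proof. by move=> w_gt0 [xA xw]; rewrite -{1}(mkseq_prefix xw); case: (gibbs _ _ w_gt0 xA). Qed.

Lemma fin_num_cyl w : (0 < size w)%N -> mu (cyl A w) \is a fin_num.
Proof.
move=> w_gt0; have [[x wx] | w0] := pselect (exists x, cyl A w x).
  rewrite ge0_fin_numE ?measure_ge0 //.
  exact: le_lt_trans (gibbs_cyl_ub w_gt0 wx) (ltry _).
suff -> : cyl A w = set0 by rewrite measure0.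
by apply/seteqP; split => x // wx; apply: w0; exists x.
Qed.

Lemma weight_distortion w y z : cyl A w y -> cyl A w z ->
  weight (size w) y <= c0 ^+ 2 * weight (size w) z.
Proof.
move=> wy wz; have [->|w_gt0] := posnP (size w).
  by rewrite !gibbs_weight0 mulr1 expr_ge1 // ltW.
have := le_trans (gibbs_cyl_lb w_gt0 wy) (gibbs_cyl_ub w_gt0 wz).
rewrite lee_fin => le_yz.
rewrite -[X in X <= _](mulVKf (lt0r_neq0 c0_gt0)) expr2 -mulrA.
by apply: ler_wpM2l le_yz; exact: ltW.
Qed.

Lemma weight_lb_uniform (s : seq (seq nat)) :
  exists2 d, 0 < d &
    forall l, l \in s -> forall z, cyl A l z -> d <= weight (size l) z.
Proof.
apply: exists_pos_lb_seq => [l d d' lb d'd z lz|l _]; first exact: le_trans d'd (lb z lz).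
have [[y ly]|l0] := pselect (exists y, cyl A l y); last first.
  by exists 1 => // z lz; case: l0; exists z.
exists (c0 ^- 2 * weight (size l) y) => [|z lz].
  by rewrite mulr_gt0 ?invr_gt0 ?exprn_gt0 ?gibbs_weight_gt0.
by rewrite ler_pdivrMl ?exprn_gt0 //; exact: weight_distortion.
Qed.

Context {N : nat} {Lambda : seq (seq nat)}.
Hypothesis A_row : forall a, exists b, A a b.
Hypothesis prim : finitely_primitive_with A N Lambda.

Lemma cylI_coord_lb (d : R) b u : 0 < d ->
  (forall l, l \in Lambda -> forall z, cyl A l z -> d <= weight (size l) z) ->
  (0 < size u)%N ->
  ((c0 ^- 3 * d * fine (mu (cyl A [:: b])))%:E * mu (cyl A u)
     <= mu (cyl A u `&` [set x | x (size u + N)%N = b]))%E.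
Proof.
move=> d_gt0 Lambda_lb u_gt0.
have [[x0 ux0]|u0] := pselect (exists x, cyl A u x); last first.
  suff -> : cyl A u = set0 by rewrite measure0 mule0.
  by apply/seteqP; split => x // ux; apply: u0; exists x.
have Eb : Estar A [:: b] by split => // -[].
have [l Lambda_l Eulb] := prim.2 u [:: b] (cyl_Estar u_gt0 ux0) Eb.
have [size_l _] := prim.1 l Lambda_l.
have [y uly] := Estar_cyl A_row Eulb.
have [uy /cyl_cat[ly b_y]] := cyl_cat uly.
have ulb_sub : (cyl A (u ++ l ++ [:: b]) : set Omega) `<=`
    cyl A u `&` [set x | x (size u + N)%N = b].
  move=> x /cyl_cat[ux /cyl_cat[_ [_ xb]]]; split => //.
  by move: (xb 0%N isT); rewrite !iter_lshift add0n size_l addnC.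
set W1 := weight (size u) y.
set W2 := weight (size l) (iter (size u) lshift_seq y).
set W3 := weight (size [:: b]) (iter (size l) lshift_seq (iter (size u) lshift_seq y)).
set mb := fine (mu (cyl A [:: b])).
have mb_ge0 : 0 <= mb by rewrite fine_ge0.
have mb_ub : mb <= c0 * W3.
  by rewrite -lee_fin fineK ?fin_num_cyl //; exact: gibbs_cyl_ub _ b_y.
have W2_lb : d <= W2 by exact: Lambda_lb l Lambda_l _ ly.
have mI : measurable ((cyl A u : set Omega) `&` [set x | x (size u + N)%N = b]).
  exact: measurableI (measurable_cyl _ _) (measurable_coord _ _).
apply: (le_trans _ (le_measure mu (mem_set (measurable_cyl _ _)) (mem_set mI) ulb_sub)).
apply: (le_trans _ (gibbs_cyl_lb _ uly)); last by rewrite size_cat addn_gt0 u_gt0.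
apply: (le_trans (lee_wpmul2l _ (gibbs_cyl_ub u_gt0 uy))).
  by rewrite lee_fin !mulr_ge0 ?invr_ge0 ?exprn_ge0 ?(ltW c0_gt0) ?(ltW d_gt0).
rewrite -EFinM lee_fin !size_cat !gibbs_weightD -/W1 -/W2 -/W3.
have -> : c0 ^- 3 * d * mb * (c0 * W1) = c0 ^- 2 * W1 * (d * mb).
  by field; exact: lt0r_neq0.
have -> : c0^-1 * (W1 * (W2 * W3)) = c0 ^- 2 * W1 * (W2 * (c0 * W3)).
  by field; exact: lt0r_neq0.
apply: ler_wpM2l; last exact: ler_pM (ltW d_gt0) mb_ge0 W2_lb mb_ub.
by rewrite mulr_ge0 ?invr_ge0 ?exprn_ge0 ?ltW ?gibbs_weight_gt0.
Qed.

Lemma gibbs_mixing_lb : exists2 c, 0 < c & forall b u n,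
  (0 < size u)%N -> (size u + N <= n)%N ->
  (c%:E * mu (cyl A u) * mu (cyl A [:: b]) <= mu (cyl A u `&` [set x | x n = b]))%E.
Proof.
have [d d_gt0 Lambda_lb] := weight_lb_uniform Lambda.
exists (c0 ^- 3 * d) => [|b u n u_gt0 /subnKC <-].
  by rewrite mulr_gt0 ?invr_gt0 ?exprn_gt0.
rewrite -(fineK (fin_num_cyl [:: b] isT)) muleAC -EFinM.
apply: cylI_coord_lb_delay => [|v v_gt0|//].
  by rewrite !mulr_ge0 ?fine_ge0 ?measure_ge0 ?invr_ge0 ?exprn_ge0 ?ltW.
exact: cylI_coord_lb.
Qed.

End GibbsState.

Theorem lemma2p5 (R : realType) (A : nat -> nat -> bool) (N : nat)
  (Lambda : seq (seq nat))
  (hA : no_zero_rows_cols A)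
  (hprim : finitely_primitive_with A N Lambda)
  (phi : seqN -> R) (hphi : measurable_fun (SX A : set Omega) phi)
  (mu : {measure set Omega -> \bar R})
  (hgibbs : gibbs_state A phi mu) :
  exists2 c : R, 0 < c &
    forall (a b n : nat), (N < n)%N ->
      (c%:E * mu (cyl A [:: a] : set Omega) * mu (cyl A [:: b] : set Omega)
       <= mu (cyl A [:: a] `&` (iter n lshift_seq) @^-1` (cyl A [:: b]) : set Omega))%E.
Proof.
have [c0 [P [c0_ge1 gibbs]]] := hgibbs.
have [c c_gt0 mixing] := gibbs_mixing_lb c0_ge1 gibbs hA.1 hprim.
exists c => // a b n lt_Nn.
by rewrite cylI_preimage_iter_lshift; exact: mixing.
Qed.
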